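(* Let $\mathds{k}$ be an algebraically closed field, $A$ a finite abelian group, $\omega$ a normalized 3-cocycle on $A$ with values in $\mathds{k}^{\times}$, $B$ a finite abelian group, $f:B\to A$ a homomorphism with kernel $K$, and $\phi:B\times B\to\mathds{k}^\times$ a 2-cochain with $d\phi=f^*\omega^{-1}$. Then the function $Bil(\phi):B\times K\rightarrow \mathds{k}^{\times}$ given by $Bil(\phi)(b,k):=\phi(b,k)/\phi(k,b)$ is bilinear.
   Context: For a 2-cochain $\kappa$ on an abelian group, $(d\kappa)(a,b,c)=\kappa(b,c)\kappa(a+b,c)^{-1}\kappa(a,b+c)\kappa(a,b)^{-1}$; $(f^*\omega^{-1})(b,c,d)=\omega(f(b),f(c),f(d))^{-1}$. Normalized means $\omega(a,b,c)=1$ whenever one of $a,b,c$ is $0$. *)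

From HB Require Import structures.
From mathcomp Require Import all_boot all_order all_algebra.
Set Implicit Arguments. Unset Strict Implicit. Unset Printing Implicit Defensive.
Import GRing.Theory.
Local Open Scope ring_scope.

(* k^x-valued cochains are modelled as k-valued functions taking only nonzero values. *)

Definition normalized3 (k : fieldType) (A : zmodType) (w : A -> A -> A -> k) :=
  forall a b c : A, (a = 0 \/ b = 0 \/ c = 0) -> w a b c = 1.

Definition is_3cocycle (k : fieldType) (A : zmodType) (w : A -> A -> A -> k) :=
  forall a b c d : A,
    w b c d * (w (a + b) c d)^-1 * w a (b + c) d * (w a b (c + d))^-1 * w a b c = 1.

Definition coboundary2 (k : fieldType) (B : zmodType) (kap : B -> B -> k) :
  B -> B -> B -> k :=
  fun a b c => kap b c * (kap (a + b) c)^-1 * kap a (b + c) * (kap a b)^-1.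

Definition pullback_inv (k : fieldType) (A B : zmodType) (f : B -> A)
  (w : A -> A -> A -> k) : B -> B -> B -> k :=
  fun b c d => (w (f b) (f c) (f d))^-1.

Definition Bil (k : fieldType) (B : zmodType) (phi : B -> B -> k) (b x : B) : k :=
  phi b x / phi x b.

From HB Require Import structures.
From mathcomp Require Import all_boot all_order all_algebra.
From mathcomp Require Import ring.
Set Implicit Arguments. Unset Strict Implicit. Unset Printing Implicit Defensive.
Import GRing.Theory.
Local Open Scope ring_scope.

(* Since ω is normalized, f^*ω^-1 is trivial on every triple with an entry in
   K = ker f, so dφ = f^*ω^-1 makes φ a 2-cocycle on such triples.  The cocycle
   identities at (b1,b2,x), (x,b1,b2), (b1,x,b2) combine into
   Bil(b1+b2,x) = Bil(b1,x) Bil(b2,x), and those at (b,x1,x2), (x1,x2,b), (x1,b,x2)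
   into Bil(b,x1+x2) = Bil(b,x1) Bil(b,x2). *)

Definition cocycle2_at (k : fieldType) (B : zmodType) (phi : B -> B -> k)
    (a b c : B) : Prop :=
  phi b c * phi a (b + c) = phi (a + b) c * phi a b.

Section CocycleAt.

Variables (k : fieldType) (B : zmodType) (phi : B -> B -> k).
Hypothesis phi_nz : forall b c, phi b c != 0.

Lemma cocycle2_at_of_coboundary2_eq1 a b c : coboundary2 phi a b c = 1 -> cocycle2_at phi a b c.
Proof.
move=> d1; rewrite /cocycle2_at -[RHS]mulr1 -d1 /coboundary2.
by field; rewrite !phi_nz.
Qed.

Lemma cocycle2_at_addl a b c :
  cocycle2_at phi a b c -> phi (a + b) c = phi b c * phi a (b + c) / phi a b.
Proof. by move->; rewrite mulfK. Qed.

Lemma cocycle2_at_addr a b c :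
  cocycle2_at phi a b c -> phi a (b + c) = phi (a + b) c * phi a b / phi b c.
Proof. by move/esym->; rewrite mulrC mulKf. Qed.

Lemma BilDl b1 b2 x :
    cocycle2_at phi b1 b2 x -> cocycle2_at phi x b1 b2 -> cocycle2_at phi b1 x b2 ->
  Bil phi (b1 + b2) x = Bil phi b1 x * Bil phi b2 x.
Proof.
move=> c12x cx12 c1x2; rewrite /Bil (cocycle2_at_addl c12x) (cocycle2_at_addr cx12).
rewrite (addrC b2 x) (cocycle2_at_addr c1x2) (addrC x b1).
by field; rewrite !phi_nz.
Qed.

Lemma BilDr b x1 x2 :
    cocycle2_at phi b x1 x2 -> cocycle2_at phi x1 x2 b -> cocycle2_at phi x1 b x2 ->
  Bil phi b (x1 + x2) = Bil phi b x1 * Bil phi b x2.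
Proof.
move=> cb12 c12b c1b2; rewrite /Bil (cocycle2_at_addr cb12) (cocycle2_at_addl c12b).
rewrite (addrC x2 b) (cocycle2_at_addr c1b2) (addrC x1 b).
by field; rewrite !phi_nz.
Qed.

End CocycleAt.

Lemma pullback_inv_normalized (k : fieldType) (A B : zmodType) (f : B -> A)
    (w : A -> A -> A -> k) a b c :
  normalized3 w -> f a = 0 \/ f b = 0 \/ f c = 0 -> pullback_inv f w a b c = 1.
Proof. by move=> w_norm fabc; rewrite /pullback_inv w_norm ?invr1. Qed.

Theorem lemma2p1p1 (k : closedFieldType) (A : finZmodType)
  (w : A -> A -> A -> k)
  (w_nz : forall a b c, w a b c != 0)
  (w_norm : normalized3 w) (w_coc : is_3cocycle w)
  (B : finZmodType) (f : {additive B -> A})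
  (phi : B -> B -> k) (phi_nz : forall b c, phi b c != 0)
  (dphi : forall a b c, coboundary2 phi a b c = pullback_inv f w a b c) :
  (forall b1 b2 x : B, f x = 0 -> Bil phi (b1 + b2) x = Bil phi b1 x * Bil phi b2 x) /\
  (forall (b x1 x2 : B), f x1 = 0 -> f x2 = 0 ->
      Bil phi b (x1 + x2) = Bil phi b x1 * Bil phi b x2).
Proof.
have cocycle_ker a b c : f a = 0 \/ f b = 0 \/ f c = 0 -> cocycle2_at phi a b c.
  by move=> fabc; apply: cocycle2_at_of_coboundary2_eq1 => //; rewrite dphi pullback_inv_normalized.
split=> [b1 b2 x fx | b x1 x2 fx1 _].
- by apply: BilDl => //; apply: cocycle_ker; auto.
- by apply: BilDr => //; apply: cocycle_ker; auto.
Qed.
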